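(* Let $P,Q\in\mathcal{PP}(n)$ with $\iota(P)\leq Q$. Then $\langle P,Q\rangle_q=q^{n(n-1)-\ell(P)-\ell(Q)}$, where $\ell(R)=\sharp\{(x,y)\in R^2\mid x<_r y\}$.
   Context: A plane poset is a finite set with two partial orders $\leq_h,\leq_r$ such that two distinct elements are $\leq_h$-comparable iff they are not $\leq_r$-comparable; $\mathcal{PP}(n)$ is the set of isomorphism classes of plane posets with $n$ elements. On a plane poset, $x\leq y$ iff ($x\leq_h y$ or $x\leq_r y$) is a total order (known fact). For $P,Q\in\mathcal{PP}(n)$, $\theta_{P,Q}$ is the increasing bijection $P\to Q$ and $P\leq Q$ means: for all $x,y\in P$, $\theta_{P,Q}(x)\leq_h\theta_{P,Q}(y)$ in $Q$ implies $x\leq_h y$ in $P$. $\iota(P)=(P,\leq_r,\leq_h)$. For $q$ in a field $K$, $\langle P,Q\rangle_q=q^{\phi(P,Q)}$ if $\iota(P)\leq Q$ and $0$ otherwise, where $\phi(P,Q)=\sharp\{(x,y)\in P^2\mid x<_r y,\ \theta_{P,Q}(x)<_h\theta_{P,Q}(y)\}+\sharp\{(x,y)\in P^2\mid x<_h y,\ \theta_{P,Q}(x)<_r\theta_{P,Q}(y)\}$, with $q^0=1$. *)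

From mathcomp Require Import all_boot all_order all_algebra.
Set Implicit Arguments. Unset Strict Implicit. Unset Printing Implicit Defensive.
Import GRing.Theory.

Record plane_poset (T : finType) := PlanePoset {
  leh : rel T;
  ler : rel T;
  leh_refl : reflexive leh;
  leh_anti : forall x y, leh x y -> leh y x -> x = y;
  leh_trans : transitive leh;
  ler_refl : reflexive ler;
  ler_anti : forall x y, ler x y -> ler y x -> x = y;
  ler_trans : transitive ler;
  plane_ax : forall x y, x != y ->
     (leh x y || leh y x) = ~~ (ler x y || ler y x)
}.

Arguments leh {T} p x y.
Arguments ler {T} p x y.

Definition lth {T : finType} (P : plane_poset T) (x y : T) := (x != y) && leh P x y.
Definition ltr {T : finType} (P : plane_poset T) (x y : T) := (x != y) && ler P x y.

Definition pp_le {T : finType} (P : plane_poset T) (x y : T) := leh P x y || ler P x y.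

Lemma iota_plane_ax (T : finType) (P : plane_poset T) (x y : T) : x != y ->
  (ler P x y || ler P y x) = ~~ (leh P x y || leh P y x).
Proof. by move=> /(plane_ax P) ->; rewrite negbK. Qed.

Definition pp_iota {T : finType} (P : plane_poset T) : plane_poset T :=
  @PlanePoset T (ler P) (leh P) (@ler_refl T P) (@ler_anti T P) (@ler_trans T P)
    (@leh_refl T P) (@leh_anti T P) (@leh_trans T P) (@iota_plane_ax T P).

(* theta is an increasing bijection P -> Q (for the total orders); such a
   bijection exists and is unique when #|T| = #|U|: it is theta_{P,Q}. *)
Definition incr_bij {T U : finType} (P : plane_poset T) (Q : plane_poset U)
  (theta : T -> U) : Prop :=
  bijective theta /\ forall x y, pp_le P x y -> pp_le Q (theta x) (theta y).

Definition pp_leq {T U : finType} (P : plane_poset T) (Q : plane_poset U)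
  (theta : T -> U) : bool :=
  [forall x, forall y, leh Q (theta x) (theta y) ==> leh P x y].

Definition phi {T U : finType} (P : plane_poset T) (Q : plane_poset U)
  (theta : T -> U) : nat :=
  #|[set xy : T * T | ltr P xy.1 xy.2 && lth Q (theta xy.1) (theta xy.2)]|
  + #|[set xy : T * T | lth P xy.1 xy.2 && ltr Q (theta xy.1) (theta xy.2)]|.

Definition pairing {K : fieldType} {T U : finType} (P : plane_poset T)
  (Q : plane_poset U) (theta : T -> U) (q : K) : K :=
  if pp_leq (pp_iota P) Q theta then (q ^+ phi P Q theta)%R else 0%R.

Definition ellr {T : finType} (R : plane_poset T) : nat :=
  #|[set xy : T * T | ltr R xy.1 xy.2]|.

From mathcomp Require Import all_boot all_order all_algebra.
From mathcomp Require Import zify.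

Set Implicit Arguments.
Unset Strict Implicit.
Unset Printing Implicit Defensive.

(* Since iota(P) <= Q, theta(x) <_h theta(y) forces x <_r y, so the first set
   counted by phi is in bijection with the strict h-pairs of Q; and since theta
   is increasing, x <_h y forces theta(x) <_r theta(y), so the second set is the
   set of strict h-pairs of P.  Hence phi(P,Q) = l_h(Q) + l_h(P).  In any plane
   poset every ordered pair of distinct elements is a strict h- or r-pair in
   exactly one direction, so 2 (l_h(R) + l_r(R)) = n(n-1), which gives
   phi(P,Q) = n(n-1) - l_r(P) - l_r(Q). *)

Definition ellh {T : finType} (R : plane_poset T) : nat :=
  #|[set xy : T * T | lth R xy.1 xy.2]|.

Lemma card_rel_pairs (T : finType) (p : rel T) :
  #|[set xy : T * T | p xy.1 xy.2]| = \sum_x \sum_y (p x y : nat).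
Proof.
rewrite -sum1_card big_mkcond /= pair_big /=.
by apply: eq_bigr => -[x y] _; rewrite inE; case: (p x y).
Qed.

Lemma card_rel_pairs_bij (T U : finType) (f : T -> U) (p : rel U) :
  bijective f ->
  #|[set xy : T * T | p (f xy.1) (f xy.2)]| = #|[set uv : U * U | p uv.1 uv.2]|.
Proof.
case=> g fK gK.
have bij_ff : bijective (fun xy : T * T => (f xy.1, f xy.2)).
  by exists (fun uv => (g uv.1, g uv.2)) => -[? ?] /=; rewrite ?fK ?gK.
rewrite -(on_card_preimset (onW_bij _ bij_ff)).
by apply: eq_card => -[x y]; rewrite !inE.
Qed.

Lemma sum_pairs_neq (T : finType) :
  \sum_(x : T) \sum_(y : T) ((x != y) : nat) = #|T| * (#|T| - 1).
Proof.
rewrite (eq_bigr (fun _ => #|T| - 1)) ?sum_nat_const 1?mulnC // => x _.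
rewrite -big_mkcond sum1_card subn1 -(cardC1 x) /=.
by apply: eq_card => y; rewrite !inE eq_sym.
Qed.

Lemma strict_comparable (T : eqType) (r : rel T) (x y : T) :
  (forall x y, r x y -> r y x -> x = y) -> x != y ->
  ((x != y) && r x y : nat) + ((y != x) && r y x) = r x y || r y x.
Proof.
move=> r_anti neq_xy; rewrite neq_xy eq_sym neq_xy /=.
case rxy: (r x y); case ryx: (r y x) => //.
by rewrite (r_anti _ _ rxy ryx) eqxx in neq_xy.
Qed.

Lemma plane_strict_pairs (T : finType) (R : plane_poset T) (x y : T) :
  (lth R x y : nat) + lth R y x + ltr R x y + ltr R y x = (x != y).
Proof.
have [<-|neq_xy] := eqVneq x y; first by rewrite /lth /ltr eqxx.
rewrite -addnA (strict_comparable (@leh_anti T R)) //.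
rewrite (strict_comparable (@ler_anti T R)) // (plane_ax R neq_xy).
by case: (ler R x y || ler R y x).
Qed.

Lemma ellh_ellr (T : finType) (R : plane_poset T) :
  2 * (ellh R + ellr R) = #|T| * (#|T| - 1).
Proof.
rewrite /ellh /ellr !card_rel_pairs -sum_pairs_neq.
have swap (p : rel T) : \sum_x \sum_y (p y x : nat) = \sum_x \sum_y (p x y : nat).
  exact: exchange_big.
transitivity (\sum_x \sum_y
    ((lth R x y : nat) + lth R y x + ltr R x y + ltr R y x)); last first.
  by apply: eq_bigr => x _; apply: eq_bigr => y _; rewrite plane_strict_pairs.
under [RHS]eq_bigr => x _ do rewrite !big_split /=.
rewrite !big_split /= (swap (lth R)) (swap (ltr R)); lia.
Qed.

Section IotaBelow.

Variables (T U : finType) (P : plane_poset T) (Q : plane_poset U).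
Variable theta : T -> U.
Hypothesis theta_incr : incr_bij P Q theta.
Hypothesis iotaP_le_Q : pp_leq (pp_iota P) Q theta.

Let theta_inj : injective theta := bij_inj theta_incr.1.

Lemma ler_of_leh_theta x y : leh Q (theta x) (theta y) -> ler P x y.
Proof. by move=> hQ; have := forallP (forallP iotaP_le_Q x) y; rewrite hQ. Qed.

Lemma ltr_of_lth_theta x y : lth Q (theta x) (theta y) -> ltr P x y.
Proof.
case/andP=> neq_theta hQ; rewrite /ltr (ler_of_leh_theta hQ) andbT.
by apply: contraNneq neq_theta => ->.
Qed.

Lemma ltr_theta_of_lth x y : lth P x y -> ltr Q (theta x) (theta y).
Proof.
case/andP=> neq_xy hP; rewrite /ltr (inj_eq theta_inj) neq_xy /=.
have := theta_incr.2 x y; rewrite /pp_le hP => /(_ isT).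
case hQ: (leh Q (theta x) (theta y)) => //= _.
by have := plane_ax P neq_xy; rewrite hP (ler_of_leh_theta hQ).
Qed.

Lemma phi_ellh : phi P Q theta = ellh Q + ellh P.
Proof.
rewrite /phi /ellh -(card_rel_pairs_bij (lth Q) theta_incr.1); congr (_ + _).
  apply: eq_card => -[x y]; rewrite !inE /=.
  by apply/andP/idP => [[]//|hQ]; rewrite (ltr_of_lth_theta hQ).
apply: eq_card => -[x y]; rewrite !inE /=.
by apply/andP/idP => [[]//|hP]; rewrite (ltr_theta_of_lth hP).
Qed.

End IotaBelow.

Theorem proposition28 (K : fieldType) (q : K) (n : nat) (T U : finType)
  (P : plane_poset T) (Q : plane_poset U) (theta : T -> U) :
  #|T| = n -> #|U| = n ->
  incr_bij P Q theta ->
  pp_leq (pp_iota P) Q theta ->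
  pairing P Q theta q = (q ^+ (n * (n - 1) - ellr P - ellr Q)%N)%R.
Proof.
move=> cardT cardU theta_incr iotaP_le_Q.
rewrite /pairing iotaP_le_Q (phi_ellh theta_incr iotaP_le_Q).
have := ellh_ellr P; have := ellh_ellr Q; rewrite cardT cardU => countQ countP.
congr (_ ^+ _)%R; lia.
Qed.
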